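(* Let $(M,g)$ be an $n$-dimensional semi-Riemannian manifold with Weyl tensor $C^{ab}{}_{cd}$, and let $N=n(n-1)/2$. Suppose the characteristic coefficient $c_N$ is nonzero (equivalently $\det(\mathbf{C})\neq 0$). Then, for a given tensor $H^{ab}{}_c$, the inhomogeneous algebraic equation for the vector $V^d$ $$C^{ab}{}_{cd}V^{d}=H^{ab}{}_{c}$$ has a unique solution, given by $$V^a=\frac{2}{(n-1)c_N}\,H^{ij}{}_b\Bigl(c_0\,\overset{N-1}{C}{}^{ab}{}_{ij}+c_2\,\overset{N-3}{C}{}^{ab}{}_{ij}+c_3\,\overset{N-4}{C}{}^{ab}{}_{ij}+\cdots+c_{N-2}\,C^{ab}{}_{ij}\Bigr),$$ i.e. the sum runs over $k=0,2,3,\dots,N-2$ of $c_k\,\overset{N-1-k}{C}{}^{ab}{}_{ij}$.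
   Context: For $p\ge 1$ the Weyl chain of $p$ Weyl tensors is $\overset{p}{C}{}^{ab}{}_{cd}=C^{ab}{}_{i_1j_1}C^{i_1j_1}{}_{i_2j_2}\cdots C^{i_{p-1}j_{p-1}}{}_{cd}$ (so $\overset{1}{C}{}^{ab}{}_{cd}=C^{ab}{}_{cd}$), and $\overset{p}{C}=\overset{p}{C}{}^{ab}{}_{ab}$ denotes its full trace. Writing $A=[ab]$, $C=[cd]$ with $A,C=1,\dots,N$, the Weyl tensor defines a trace-free $N\times N$ matrix $\mathbf{C}$ with $\mathbf{C}^p\leftrightarrow \overset{p}{C}{}^{ab}{}_{cd}$ and $\mathrm{tr}(\mathbf{C}^p)=\overset{p}{C}$. The characteristic coefficients are those of the Cayley–Hamilton theorem $\sum_{k=0}^N c_k\mathbf{C}^{N-k}=0$: $c_0=1$, $c_1=0$, and $c_k=-\frac1k\sum_{i=1}^{k}c_{k-i}\overset{i}{C}$ (e.g. $c_2=-\tfrac12\overset{2}{C}$, $c_3=-\tfrac13\overset{3}{C}$, $c_4=-\tfrac14(\overset{4}{C}-\tfrac12(\overset{2}{C})^2)$); in particular $(-1)^N\det(\mathbf{C})=c_N$.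
   Formalization: The equation is assumed to have at least one solution for the given H, and then a vector V solves it exactly when V equals the displayed formula; existence for arbitrary H is not claimed. Each condition added here is assumed in the paper as well or is needed for the statement above to hold. *)

(* Pointwise (algebraic) formalization: components in a frame
   of the tangent space at a point, indices in 'I_n. *)
From HB Require Import structures.
From mathcomp Require Import all_boot all_order all_algebra.
Set Implicit Arguments. Unset Strict Implicit. Unset Printing Implicit Defensive.
Import Order.TTheory GRing.Theory Num.Theory.
Local Open Scope ring_scope.

Section Weyl.
Variables (R : realFieldType) (n : nat).

(* A (2,2)-tensor T^{ab}_{cd} is represented by  T a b c d. *)
Definition tensor22 := 'I_n -> 'I_n -> 'I_n -> 'I_n -> R.

Definition lower (g : 'M[R]_n) (C : tensor22) a b c d :=
  \sum_(e < n) \sum_(f < n) g a e * g b f * C e f c d.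

Definition is_weyl (g : 'M[R]_n) (C : tensor22) : Prop :=
  [/\ (forall a b c d, C a b c d = - C b a c d),
      (forall a b c d, C a b c d = - C a b d c),
      (forall a b c d, lower g C a b c d = lower g C c d a b),
      (forall a b c d, lower g C a b c d + lower g C a c d b
                        + lower g C a d b c = 0) &
      (forall b d, \sum_(a < n) C a b a d = 0)].

(* Weyl chain  C^p^{ab}_{cd}  for p >= 1 (wchain C 0 is junk, equal to C). *)
Fixpoint wchain (C : tensor22) (p : nat) : tensor22 :=
  match p with
  | 0 | 1 => C
  | p'.+1 => fun a b c d =>
      \sum_(i < n) \sum_(j < n) wchain C p' a b i j * C i j c d
  end.

Definition wtrace (C : tensor22) (p : nat) : R :=
  \sum_(a < n) \sum_(b < n) wchain C p a b a b.

Fixpoint charcoefs (C : tensor22) (k : nat) : seq R :=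
  match k with
  | 0 => [:: 1]
  | k'.+1 =>
      let s := charcoefs C k' in
      rcons s (- (k'.+1%:R)^-1 *
               \sum_(1 <= i < k'.+2) nth 0 s (k'.+1 - i) * wtrace C i)
  end.

Definition charcoef (C : tensor22) (k : nat) : R := nth 0 (charcoefs C k) k.

Definition Nbiv : nat := (n * (n - 1)) %/ 2.

Definition solves (C : tensor22) (H : 'I_n -> 'I_n -> 'I_n -> R)
    (V : 'I_n -> R) : Prop :=
  forall a b c, \sum_(d < n) C a b c d * V d = H a b c.

Definition weyl_solution (C : tensor22) (H : 'I_n -> 'I_n -> 'I_n -> R)
    (a : 'I_n) : R :=
  2 / ((n%:R - 1) * charcoef C Nbiv) *
  \sum_(i < n) \sum_(j < n) \sum_(b < n)
     H i j b * (\sum_(0 <= k < Nbiv.-1 | k != 1%N)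
                  charcoef C k * wchain C (Nbiv - 1 - k) a b i j).

End Weyl.

(* The Weyl tensor acts on bivectors (pairs a < b) through an N x N matrix K with
   K = 2 C entrywise, chosen so that the Weyl chain of length p corresponds to K^p / 2 and its
   trace to tr K^p.  By Newton's identities the c_k are the coefficients of the characteristic
   polynomial of K, so Cayley-Hamilton becomes the tensor identity
   sum_{k<N} c_k C^{N-k} + c_N Id = 0, Id being the identity on bivectors.  Contract it with
   X^{cd}_e = delta^{[c}_e V^{d]}: a solution V satisfies C X_e = H_e, hence every chain
   C^{p+1} X_e becomes C^p H_e and Id X_e = X_e.  Taking the trace b = e, the term
   c_{N-1} H^{ae}_e vanishes because C is trace-free, and X^{ae}_e = (1 - n)/2 V^a; solving for
   V^a gives the formula. *)
From HB Require Import structures.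
From mathcomp Require Import all_boot all_order all_algebra.
From mathcomp Require Import zify ring.
Set Implicit Arguments. Unset Strict Implicit. Unset Printing Implicit Defensive.
Import Order.TTheory GRing.Theory Num.Theory.
Local Open Scope ring_scope.

Lemma sum_delta (R : pzSemiRingType) (I : finType) (e : I) (F : I -> R) :
  \sum_i (i == e)%:R * F i = F e.
Proof. by under eq_bigr do rewrite mulr_natl mulrb; rewrite -big_mkcond big_pred1_eq. Qed.

Lemma exchange_big22 (V : nmodType) (I1 I2 J1 J2 : finType)
    (F : I1 -> I2 -> J1 -> J2 -> V) :
  \sum_i \sum_j \sum_k \sum_l F i j k l = \sum_k \sum_l \sum_i \sum_j F i j k l.
Proof.
under eq_bigr => i _ do rewrite exchange_big.
under eq_bigr => i _ do under eq_bigr => k _ do rewrite exchange_big.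
by rewrite exchange_big; under eq_bigr => k _ do rewrite exchange_big.
Qed.

Lemma eq_oppr_eq0 (R : numDomainType) (x : R) : x = - x -> x = 0.
Proof. by move/esym/eqP; rewrite eqNr => /eqP. Qed.

Section NewtonIdentities.
Variable F : fieldType.

Lemma deriv_big_prod (I : eqType) (r : seq I) (f : I -> {poly F}) : uniq r ->
  (\prod_(i <- r) f i)^`() =
  \sum_(k <- r) \prod_(i <- r) (if i == k then (f i)^`() else f i).
Proof.
elim: r => [|x r IH] /=; first by rewrite !big_nil -polyC1 derivC.
move=> /andP [xr ur]; rewrite !big_cons derivM IH // eqxx big_distrr /=.
congr (_ * _ + _).
  by apply: eq_big_seq => i ir; case: eqP => // ix; rewrite -ix ir in xr.
apply: eq_big_seq => k kr.
have xk : x != k by apply: contraNneq xr => ->.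
by rewrite big_cons (negPf xk).
Qed.

Lemma deriv_det d (X : 'M[{poly F}]_d) :
  (\det X)^`() =
  \sum_(k < d) \det (\matrix_(i, j) if i == k then (X i j)^`() else X i j).
Proof.
rewrite /determinant raddf_sum /= exchange_big /=; apply: eq_bigr => s _.
rewrite -big_distrr /= derivM.
have -> : ((-1) ^+ perm.odd_perm s : {poly F})^`() = 0.
  by case: (perm.odd_perm s); rewrite ?expr0 ?expr1 -?polyC1 ?derivN derivC ?oppr0.
rewrite mul0r add0r deriv_big_prod ?index_enum_uniq //; congr (_ * _).
by apply: eq_bigr => k _; apply: eq_bigr => i _; rewrite mxE.
Qed.

Section CharPoly.
Variables (d : nat) (A : 'M[F]_d).
Local Notation q := (char_poly A).

Lemma deriv_char_poly : q^`() = \tr (\adj (char_poly_mx A)).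
Proof.
rewrite /char_poly deriv_det; apply: eq_bigr => k _.
rewrite (expand_det_row _ k) (bigD1 k) //= big1 ?addr0.
  rewrite !mxE eqxx /= mulr1n derivB derivX derivC subr0 mul1r /cofactor.
  congr (_ * \det _); apply/matrixP => i j.
  by rewrite !mxE eq_sym (negbTE (neq_lift _ _)).
move=> j kj; rewrite !mxE eqxx eq_sym (negbTE kj) mulr0n sub0r derivN derivC.
by rewrite oppr0 mul0r.
Qed.

Lemma char_poly_coef_big i : (d < i)%N -> q`_i = 0.
Proof. by move=> di; rewrite nth_default // size_char_poly. Qed.

Lemma char_poly_coef_top : q`_d = 1.
Proof.
by have /monicP := char_poly_monic A; rewrite lead_coefE size_char_poly.
Qed.

Lemma Cayley_Hamilton_coef : \sum_(i < d.+1) q`_i *: A ^+ i = 0.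
Proof.
case: d A => [|d'] A'; first exact: flatmx0.
rewrite -[RHS](Cayley_Hamilton A') /horner_mx /horner_morph horner_coef.
rewrite size_map_poly size_char_poly; apply: eq_bigr => i _.
by rewrite coef_map /= -mulmxE mul_scalar_mx.
Qed.

Definition adj_coef j : 'M[F]_d := \matrix_(i, k) ((\adj (char_poly_mx A)) i k)`_j.

Definition horner_quotient j : 'M[F]_d := \sum_(i < d.+1) q`_(j.+1 + i) *: A ^+ i.

Lemma adj_coef_rec j :
  (if j is j'.+1 then adj_coef j' else 0) - A *m adj_coef j = (q`_j)%:M.
Proof.
apply/matrixP => i k.
have := congr1 (fun M : 'M[{poly F}]_d => (M i k)`_j) (mul_mx_adj (char_poly_mx A)).
rewrite /= !mxE coefMn => <-.
set P := fun l => (\adj (char_poly_mx A)) l k.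
rewrite (eq_bigr (fun l => ('X * P l) *+ (i == l) - (A i l)%:P * P l)); last first.
  move=> l _; have -> : char_poly_mx A i l = 'X *+ (i == l) - (A i l)%:P.
    by rewrite !mxE.
  by rewrite mulrBl mulrnAl.
rewrite sumrB.
have -> : \sum_(l < d) 'X * P l *+ (i == l) = 'X * P i.
  rewrite (bigD1 i) //= eqxx mulr1n big1 ?addr0 // => l /negPf il.
  by rewrite eq_sym il mulr0n.
rewrite coefB coefXM coef_sum; congr (_ - _).
  by case: j => [|j] //=; rewrite mxE.
by apply: eq_bigr => l _; rewrite mul_polyC coefZ mxE.
Qed.

Lemma horner_quotient_rec j :
  horner_quotient j - A *m horner_quotient j.+1 = (q`_j.+1)%:M.
Proof.
rewrite /horner_quotient big_ord_recl [in X in _ - _ *m X]big_ord_recr /=.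
rewrite mulmxE mulrDr mulr_sumr (@char_poly_coef_big (j.+2 + d)); last by lia.
rewrite scale0r mulr0 addr0.
have -> : \sum_(i < d) A * (q`_(j.+2 + i) *: A ^+ i) =
    \sum_(i < d) q`_(j.+1 + bump 0 i) *: A ^+ bump 0 i.
  apply: eq_bigr => i _; rewrite -mulmxE -scalemxAr mulmxE -exprS.
  by rewrite /bump leq0n add1n addnS addSn.
by rewrite addrK addn0 expr0 scalemx1.
Qed.

Lemma adj_coef_eventually0 : exists J, forall j, (J <= j)%N -> adj_coef j = 0.
Proof.
exists (\max_(ik : 'I_d * 'I_d) size ((\adj (char_poly_mx A)) ik.1 ik.2))%N.
move=> j Jj; apply/matrixP => i k; rewrite [LHS]mxE [RHS]mxE nth_default //.
apply: leq_trans Jj.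
by have := @leq_bigmax _
  (fun ik : 'I_d * 'I_d => size ((\adj (char_poly_mx A)) ik.1 ik.2)) (i, k).
Qed.

(* adj ('X - A) = \sum_j 'X^j S_j with S_j = horner_quotient j, i.e. the adjugate is the
   polynomial quotient (q('X) - q(A)) / ('X - A). *)
Lemma adj_coefE j : adj_coef j = horner_quotient j.
Proof.
have shift i : adj_coef i - horner_quotient i =
    A *m (adj_coef i.+1 - horner_quotient i.+1).
  rewrite mulmxBr -[adj_coef i](subrK (A *m adj_coef i.+1)).
  rewrite -[horner_quotient i](subrK (A *m horner_quotient i.+1)).
  by rewrite (adj_coef_rec i.+1) horner_quotient_rec opprD addrACA subrr add0r.
have [J adjJ] := adj_coef_eventually0.
suff vanish k i : (J + d <= i + k)%N -> adj_coef i - horner_quotient i = 0.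
  by apply/eqP; rewrite -subr_eq0; apply/eqP; apply: (vanish (J + d)%N); lia.
elim: k i => [|k IH] i ik; last by rewrite shift IH ?mulmx0 //; lia.
rewrite adjJ; last by lia.
by rewrite /horner_quotient big1 ?subrr // => l _; rewrite char_poly_coef_big ?scale0r //; lia.
Qed.

Lemma newton_char_poly m :
  q`_m *+ m = \sum_(i < d.+1) q`_(m + i) * \tr (A ^+ i).
Proof.
case: m => [|j].
  have := congr1 mxtrace Cayley_Hamilton_coef; rewrite mxtrace0 raddf_sum /= => CH.
  by rewrite mulr0n -[LHS]CH; apply: eq_bigr => i _; rewrite mxtraceZ add0n.
have tr_adj : \tr (adj_coef j) = q`_j.+1 *+ j.+1.
  rewrite -coef_deriv deriv_char_poly /mxtrace coef_sum.
  by apply: eq_bigr => k _; rewrite mxE.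
rewrite -tr_adj adj_coefE /horner_quotient raddf_sum /=.
by apply: eq_bigr => i _; rewrite mxtraceZ addSn.
Qed.

End CharPoly.
End NewtonIdentities.

Section NewtonRecursion.
Variables (R : numFieldType) (d : nat) (A : 'M[R]_d) (c : nat -> R).
Local Notation q := (char_poly A).
Hypothesis c0 : c 0%N = 1.
Hypothesis cS : forall k, c k.+1 =
  - (k.+1%:R)^-1 * \sum_(1 <= i < k.+2) c (k.+1 - i)%N * \tr (A ^+ i).

Lemma newton_rec_char_poly k : (k <= d)%N -> c k = q`_(d - k).
Proof.
elim/ltn_ind: k => -[|k] IH kd; first by rewrite c0 subn0 char_poly_coef_top.
set m := (d - k.+1)%N.
have partial_newton :
    \sum_(1 <= i < k.+2) q`_(m + i) * \tr (A ^+ i) = - (q`_m *+ k.+1).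
  have tail0 : \sum_(k.+2 <= i < d.+1) q`_(m + i) * \tr (A ^+ i) = 0.
    rewrite big_nat_cond big1 // => i /andP [/andP [i1 _] _].
    by rewrite char_poly_coef_big ?mul0r //; lia.
  have := newton_char_poly A m.
  rewrite -(big_mkord xpredT (fun i => q`_(m + i) * \tr (A ^+ i))).
  rewrite big_ltn // addn0 expr0 mxtrace1 (big_cat_nat _ (n := k.+2)) //=; try lia.
  rewrite tail0 addr0 [in d%:R](_ : d = m + k.+1)%N; last by lia.
  rewrite natrD mulrDr !mulr_natr => newton.
  apply/eqP; rewrite -subr_eq0 opprK; apply/eqP; apply: (addrI (q`_m *+ m)).
  by rewrite addr0 [RHS]newton; ring.
have k0 : (k.+1%:R : R) != 0 by rewrite pnatr_eq0.
rewrite cS (eq_big_nat _ _ (F2 := fun i => q`_(m + i) * \tr (A ^+ i))); last first.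
  by move=> i /andP [i1 i2]; rewrite IH; [congr (q`_ _ * _)|..]; lia.
by rewrite partial_newton mulrN mulNr opprK -[q`_m *+ _]mulr_natr mulrC mulfK.
Qed.

Lemma Cayley_Hamilton_rec : \sum_(k < d.+1) c k *: A ^+ (d - k) = 0.
Proof.
rewrite -[RHS](Cayley_Hamilton_coef A) (reindex_inj rev_ord_inj) /=.
apply: eq_bigr => k _; have kd : (k <= d)%N by rewrite -ltnS ltn_ord.
by rewrite subSS newton_rec_char_poly ?subKn // leq_subr.
Qed.

End NewtonRecursion.

Section Bivectors.
Variable n : nat.

Definition biv_pairs := [pred p : 'I_n * 'I_n | (p.1 < p.2)%N].
Definition nbiv := #|biv_pairs|.
Definition biv (P : 'I_nbiv) : 'I_n * 'I_n := enum_val P.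

Lemma biv_lt P : ((biv P).1 < (biv P).2)%N.
Proof. by have := enum_valP P; rewrite inE. Qed.

Lemma biv_surj (a b : 'I_n) : (a < b)%N -> exists P, a = (biv P).1 /\ b = (biv P).2.
Proof.
move=> ab; have ab_biv : (a, b) \in biv_pairs by rewrite inE.
by exists (enum_rank_in ab_biv (a, b)); rewrite /biv enum_rankK_in.
Qed.

Lemma sum_sym_pairs (V : nmodType) (f : 'I_n -> 'I_n -> V) :
    (forall a b, f a b = f b a) -> (forall a, f a a = 0) ->
  \sum_(a < n) \sum_(b < n) f a b = (\sum_(P < nbiv) f (biv P).1 (biv P).2) *+ 2.
Proof.
move=> fC f0; pose up (a b : 'I_n) := if (a < b)%N then f a b else 0.
have split_diag : \sum_(a < n) \sum_(b < n) f a b =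
    \sum_(a < n) \sum_(b < n) up a b + \sum_(a < n) \sum_(b < n) up b a.
  rewrite -big_split /=; apply: eq_bigr => a _; rewrite -big_split /=.
  apply: eq_bigr => b _; rewrite /up; case: ltngtP => ab; rewrite ?addr0 ?add0r //.
  by rewrite (val_inj ab) f0.
have up_biv : \sum_(a < n) \sum_(b < n) up a b = \sum_(P < nbiv) f (biv P).1 (biv P).2.
  rewrite /nbiv /biv -(big_enum_val (A := biv_pairs) (fun p => f p.1 p.2)) /=.
  by rewrite pair_big /= [RHS]big_mkcond.
rewrite split_diag [X in _ + X]exchange_big /=.
by rewrite up_biv mulr2n.
Qed.

Lemma nbivE : nbiv = Nbiv n.
Proof.
pose f (a b : 'I_n) : nat := a != b.
have row_sum a : \sum_(b < n) f a b = (n - 1)%N.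
  rewrite (bigD1 a) //= /f eqxx add0r (eq_bigr (fun _ => 1%N)); last first.
    by move=> b ba; rewrite eq_sym ba.
  by rewrite sumr_const cardC1 card_ord natn subn1.
have fC a b : f a b = f b a by rewrite /f eq_sym.
have f0 a : f a a = 0 by rewrite /f eqxx.
have := sum_sym_pairs fC f0.
under eq_bigr do rewrite row_sum.
under [in X in _ = X]eq_bigr => P _ do rewrite /f neq_ltn biv_lt.
rewrite !sumr_const !card_ord -[_ *+ n]mulr_natr -[_ *+ 2]mulr_natr.
rewrite -[1%N *+ _]mulr_natr !natn mul1r => count.
by rewrite /Nbiv mulnC [(_ * _)%N]count mulnK.
Qed.

End Bivectors.

Lemma Nbiv_gt0 n : (2 <= n)%N -> (0 < Nbiv n)%N.
Proof. by move=> n_ge2; rewrite /Nbiv divn_gt0 //; nia. Qed.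



Lemma antisym_tensor_eq0 (R : numDomainType) n
    (E : 'I_n -> 'I_n -> 'I_n -> 'I_n -> R) :
    (forall a b c d, E a b c d = - E b a c d) ->
    (forall a b c d, E a b c d = - E a b d c) ->
    (forall a b c d : 'I_n, (a < b)%N -> (c < d)%N -> E a b c d = 0) ->
  forall a b c d, E a b c d = 0.
Proof.
move=> E_ab E_cd E_lt.
have E_ltl (a b c d : 'I_n) : (a < b)%N -> E a b c d = 0.
  move=> ab; case: (ltngtP c d) => cd; first exact: E_lt.
    by rewrite E_cd E_lt ?oppr0.
  by rewrite (val_inj cd); apply: eq_oppr_eq0; rewrite -E_cd.
move=> a b c d; case: (ltngtP a b) => ab; first exact: E_ltl.
  by rewrite E_ab E_ltl ?oppr0.
by rewrite (val_inj ab); apply: eq_oppr_eq0; rewrite -E_ab.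
Qed.

Section WeylBivectorMatrix.
Variables (R : realFieldType) (n : nat) (C : tensor22 R n).
Hypothesis C_antisym_l : forall a b c d, C a b c d = - C b a c d.
Hypothesis C_antisym_r : forall a b c d, C a b c d = - C a b d c.

Lemma wchainSS p a b c d :
  wchain C p.+2 a b c d = \sum_(i < n) \sum_(j < n) wchain C p.+1 a b i j * C i j c d.
Proof. by []. Qed.

Lemma wchain_antisym_l p a b c d : wchain C p a b c d = - wchain C p b a c d.
Proof.
elim: p a b c d => [|[|p] IH] a b c d; try exact: C_antisym_l.
rewrite !wchainSS -sumrN; apply: eq_bigr => i _; rewrite -sumrN.
by apply: eq_bigr => j _; rewrite IH mulNr.
Qed.

Lemma wchain_antisym_r p a b c d : wchain C p a b c d = - wchain C p a b d c.
Proof.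
case: p => [|[|p]]; try exact: C_antisym_r.
rewrite !wchainSS -sumrN; apply: eq_bigr => i _; rewrite -sumrN.
by apply: eq_bigr => j _; rewrite C_antisym_r mulrN.
Qed.

Local Notation N := (nbiv n).
Local Notation biv := (@biv n).

Definition biv_mx : 'M[R]_N :=
  \matrix_(P, Q) (C (biv P).1 (biv P).2 (biv Q).1 (biv Q).2 *+ 2).

Lemma wchain_biv_mx p P Q : (0 < p)%N ->
  wchain C p (biv P).1 (biv P).2 (biv Q).1 (biv Q).2 = (biv_mx ^+ p) P Q / 2.
Proof.
elim: p P Q => [//|[|p] IH] P Q _; first by rewrite expr1 mxE /=; field.
rewrite wchainSS sum_sym_pairs; last 2 first.
- by move=> i j; rewrite [wchain _ _ _ _ j i]wchain_antisym_r [C j i _ _]C_antisym_l mulrNN.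
- by move=> i; rewrite (eq_oppr_eq0 (wchain_antisym_r _ _ _ i i)) mul0r.
rewrite exprSr -mulmxE mxE -sumrMnl mulr_suml.
by apply: eq_bigr => T _; rewrite IH // mxE; field.
Qed.

Lemma wtrace_biv_mx p : (0 < p)%N -> wtrace C p = \tr (biv_mx ^+ p).
Proof.
move=> p0; rewrite /wtrace sum_sym_pairs; last 2 first.
- by move=> a b; rewrite wchain_antisym_l wchain_antisym_r opprK.
- by move=> a; rewrite (eq_oppr_eq0 (wchain_antisym_l _ a _ _ _)).
rewrite /mxtrace -mulr_natr mulr_suml.
by apply: eq_bigr => P _; rewrite wchain_biv_mx // mulfVK ?pnatr_eq0.
Qed.

Definition biv_id (a b c d : 'I_n) : R :=
  (((a == c) && (b == d))%:R - ((a == d) && (b == c))%:R) / 2.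

Lemma biv_id_biv_mx P Q : biv_id (biv P).1 (biv P).2 (biv Q).1 (biv Q).2 = (P == Q)%:R / 2.
Proof.
have [ltP ltQ] := (biv_lt P, biv_lt Q).
rewrite -(inj_eq enum_val_inj) -/(biv P) -/(biv Q) /biv_id.
case: (biv P) (biv Q) ltP ltQ => [a b] [e f] /= ab ef; rewrite xpair_eqE.
suff -> : (a == f) && (b == e) = false by rewrite subr0.
apply/negP => /andP [/eqP af /eqP be]; move: ab ef; rewrite af be => fe ef.
by have := ltn_trans fe ef; rewrite ltnn.
Qed.

Lemma wchain_Cayley_Hamilton (c : nat -> R) : (0 < N)%N ->
    \sum_(k < N.+1) c k *: biv_mx ^+ (N - k) = 0 ->
  forall a b e f,
    \sum_(k < N) c k * wchain C (N - k) a b e f + c N * biv_id a b e f = 0.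
Proof.
move=> N_gt0 CH; apply: antisym_tensor_eq0.
- move=> a b e f; rewrite opprD -sumrN; congr (_ + _).
    by apply: eq_bigr => k _; rewrite wchain_antisym_l mulrN.
  by rewrite /biv_id -mulrN -mulNr opprB [(b == e) && _]andbC [(b == f) && _]andbC.
- move=> a b e f; rewrite opprD -sumrN; congr (_ + _).
    by apply: eq_bigr => k _; rewrite wchain_antisym_r mulrN.
  by rewrite /biv_id -mulrN -mulNr opprB.
move=> a b e f ab ef.
have [[P [-> ->]] [Q [-> ->]]] := (biv_surj ab, biv_surj ef).
have /matrixP/(_ P Q) := CH; rewrite summxE big_ord_recr /= subnn expr0 !mxE.
rewrite biv_id_biv_mx.
under [in X in _ -> X]eq_bigr => k _ do rewrite wchain_biv_mx ?subn_gt0 // mulrA.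
under eq_bigr do rewrite mxE.
by rewrite mulrA -mulr_suml -mulrDl => ->; rewrite mul0r.
Qed.

End WeylBivectorMatrix.

Arguments biv_id {R n}.



Section CharCoef.
Variables (R : realFieldType) (n : nat) (C : tensor22 R n).

Lemma size_charcoefs k : size (charcoefs C k) = k.+1.
Proof. by elim: k => [|k IH] //=; rewrite size_rcons IH. Qed.

Lemma nth_charcoefs k j : (j <= k)%N -> nth 0 (charcoefs C k) j = charcoef C j.
Proof.
elim: k => [|k IH] jk; first by move: jk; rewrite leqn0 => /eqP ->.
case: (leqP j k) => [jk'|kj]; last by have -> : j = k.+1 by lia.
by rewrite /= nth_rcons size_charcoefs ltnS jk' IH.
Qed.

Lemma charcoefS k : charcoef C k.+1 =
  - (k.+1%:R)^-1 * \sum_(1 <= i < k.+2) charcoef C (k.+1 - i)%N * wtrace C i.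
Proof.
rewrite /charcoef /= nth_rcons size_charcoefs ltnn eqxx; congr (_ * _).
by apply: eq_big_nat => i /andP [i1 i2]; rewrite nth_charcoefs //; lia.
Qed.

Lemma charcoef1 : (forall b d, \sum_(a < n) C a b a d = 0) -> charcoef C 1 = 0.
Proof.
move=> C_tr; rewrite charcoefS big_nat1 subnn /=.
by rewrite /wtrace exchange_big big1 ?mulr0 // => b _; apply: C_tr.
Qed.

End CharCoef.

Section Contraction.
Variables (R : realFieldType) (n : nat).
Implicit Types (T : tensor22 R n) (Y : 'I_n -> 'I_n -> R) (V : 'I_n -> R).

Definition contract T Y a b : R := \sum_(c < n) \sum_(d < n) T a b c d * Y c d.

Definition wedge_delta V (e c d : 'I_n) : R := ((c == e)%:R * V d - (d == e)%:R * V c) / 2.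

Lemma eq_contract T Y Y' : Y =2 Y' -> contract T Y =2 contract T Y'.
Proof. by move=> eqY a b; apply: eq_bigr => c _; apply: eq_bigr => d _; rewrite eqY. Qed.

Lemma contract_wchainSS (C : tensor22 R n) p Y a b :
  contract (wchain C p.+2) Y a b = contract (wchain C p.+1) (contract C Y) a b.
Proof.
rewrite /contract.
under [RHS]eq_bigr => i _ do under eq_bigr => j _ do
  [rewrite mulr_sumr; under eq_bigr do rewrite mulr_sumr].
rewrite -exchange_big22; apply: eq_bigr => c _; apply: eq_bigr => d _.
rewrite wchainSS mulr_suml; apply: eq_bigr => i _; rewrite mulr_suml.
by apply: eq_bigr => j _; rewrite mulrA.
Qed.

Lemma contract_biv_id Y a b : (forall c d, Y c d = - Y d c) ->
  contract biv_id Y a b = Y a b.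
Proof.
move=> Y_antisym; rewrite /contract.
have expand c d : biv_id a b c d * Y c d =
    ((c == a)%:R * ((d == b)%:R * Y c d) - (c == b)%:R * ((d == a)%:R * Y c d)) / 2.
  rewrite /biv_id (eq_sym c) (eq_sym d) (eq_sym c b) (eq_sym d a).
  by case: (a == c); case: (b == d); case: (a == d); case: (b == c) => /=; ring.
under eq_bigr => c _ do under eq_bigr => d _ do rewrite expand.
under eq_bigr => c _ do rewrite -mulr_suml sumrB -!mulr_sumr !sum_delta.
by rewrite -mulr_suml sumrB !sum_delta [Y b a]Y_antisym; field.
Qed.

Lemma wedge_delta_antisym V e c d : wedge_delta V e c d = - wedge_delta V e d c.
Proof. by rewrite /wedge_delta; ring. Qed.

Lemma contract_wedge_delta T V e a b : (forall a b c d, T a b c d = - T a b d c) ->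
  contract T (wedge_delta V e) a b = \sum_(d < n) T a b e d * V d.
Proof.
move=> T_antisym; rewrite /contract.
have expand c d : T a b c d * wedge_delta V e c d =
    ((c == e)%:R * (T a b c d * V d) + (d == e)%:R * (T a b d c * V c)) / 2.
  by rewrite /wedge_delta [T a b d c]T_antisym; ring.
under eq_bigr => c _ do under eq_bigr => d _ do rewrite expand.
under eq_bigr => c _ do rewrite -mulr_suml big_split /= -mulr_sumr.
rewrite -mulr_suml big_split /= sum_delta exchange_big /=.
under [X in _ + X]eq_bigr => j _ do rewrite -mulr_sumr.
by rewrite sum_delta; field.
Qed.

Lemma sum_wedge_delta_diag V a : \sum_(e < n) wedge_delta V e a e = (1 - n%:R) / 2 * V a.
Proof.
rewrite /wedge_delta -mulr_suml sumrB.
under eq_bigr => e _ do rewrite eq_sym.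
under [X in _ - X]eq_bigr do rewrite eqxx mul1r.
by rewrite sum_delta sumr_const card_ord -mulr_natl; field.
Qed.

End Contraction.

Section WeylCayleyHamilton.
Variables (R : realFieldType) (n : nat) (C : tensor22 R n).
Hypothesis C_antisym_l : forall a b c d, C a b c d = - C b a c d.
Hypothesis C_antisym_r : forall a b c d, C a b c d = - C a b d c.

Lemma weyl_Cayley_Hamilton : (2 <= n)%N -> forall a b c d,
  \sum_(k < Nbiv n) charcoef C k * wchain C (Nbiv n - k) a b c d
    + charcoef C (Nbiv n) * biv_id a b c d = 0.
Proof.
move=> n_ge2; rewrite -nbivE; apply: wchain_Cayley_Hamilton => //.
  by rewrite nbivE Nbiv_gt0.
apply: Cayley_Hamilton_rec => // k; rewrite charcoefS; congr (_ * _).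
by apply: eq_big_nat => i /andP [i_gt0 _]; rewrite wtrace_biv_mx.
Qed.

Lemma contract_weyl_Cayley_Hamilton Y a b : (2 <= n)%N ->
    (forall c d, Y c d = - Y d c) ->
  \sum_(k < Nbiv n) charcoef C k * contract (wchain C (Nbiv n - k)) Y a b
    + charcoef C (Nbiv n) * Y a b = 0.
Proof.
move=> n_ge2 Y_antisym; rewrite -[Y a b](contract_biv_id _ _ Y_antisym) /contract.
transitivity (\sum_(c < n) \sum_(d < n)
    (\sum_(k < Nbiv n) charcoef C k * wchain C (Nbiv n - k) a b c d
      + charcoef C (Nbiv n) * biv_id a b c d) * Y c d); last first.
  by rewrite big1 // => c _; rewrite big1 // => d _; rewrite weyl_Cayley_Hamilton ?mul0r.
under [RHS]eq_bigr => c _ do under eq_bigr => d _ do rewrite mulrDl mulr_suml.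
under [RHS]eq_bigr => c _ do rewrite big_split /=.
rewrite [RHS]big_split /= mulr_sumr; congr (_ + _).
  under [RHS]eq_bigr => c _ do rewrite exchange_big.
  rewrite [RHS]exchange_big; apply: eq_bigr => k _; rewrite mulr_sumr.
  by apply: eq_bigr => c _; rewrite mulr_sumr; apply: eq_bigr => d _; rewrite mulrA.
by apply: eq_bigr => c _; rewrite mulr_sumr; apply: eq_bigr => d _; rewrite mulrA.
Qed.

End WeylCayleyHamilton.

Section WeylSolution.
Variables (R : realFieldType) (n : nat) (C : tensor22 R n).
Variable H : 'I_n -> 'I_n -> 'I_n -> R.
Hypothesis C_antisym_l : forall a b c d, C a b c d = - C b a c d.
Hypothesis C_antisym_r : forall a b c d, C a b c d = - C a b d c.
Hypothesis C_traceless : forall b d, \sum_(a < n) C a b a d = 0.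
Hypothesis n_ge2 : (2 <= n)%N.
Hypothesis cN_neq0 : charcoef C (Nbiv n) != 0.

Local Notation N := (Nbiv n).

Lemma weyl_solutionE a : weyl_solution C H a =
  2 / ((n%:R - 1) * charcoef C N) *
  \sum_(k < N.-1) charcoef C k *
    \sum_(b < n) contract (wchain C (N.-1 - k)) (fun i j => H i j b) a b.
Proof.
rewrite /weyl_solution; congr (_ * _).
have drop_c1 b i j :
    \sum_(0 <= k < N.-1 | k != 1%N) charcoef C k * wchain C (N - 1 - k) a b i j =
    \sum_(k < N.-1) charcoef C k * wchain C (N.-1 - k) a b i j.
  rewrite big_mkcond big_mkord /=; apply: eq_bigr => k _.
  by case: eqP => [->|_]; rewrite ?charcoef1 ?mul0r ?subn1.
under eq_bigr => i _ do under eq_bigr => j _ do under eq_bigr => b _ do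
  rewrite drop_c1 mulr_sumr.
under eq_bigr => i _ do under eq_bigr => j _ do rewrite exchange_big.
rewrite exchange_big22; apply: eq_bigr => k _; rewrite mulr_sumr.
apply: eq_bigr => b _; rewrite /contract mulr_sumr; apply: eq_bigr => i _.
by rewrite mulr_sumr; apply: eq_bigr => j _; rewrite mulrCA [H i j b * _]mulrC.
Qed.

Section Solution.
Variable V : 'I_n -> R.
Hypothesis V_sol : solves C H V.

Lemma solvable_rhs_trace0 a : \sum_(e < n) H a e e = 0.
Proof.
under eq_bigr => e _ do rewrite -V_sol.
rewrite exchange_big big1 // => d _.
under eq_bigr => e _ do rewrite C_antisym_l mulNr.
by rewrite sumrN -mulr_suml C_traceless mul0r oppr0.
Qed.

Lemma contract_wedge_delta_solution e :
  contract C (wedge_delta V e) =2 (fun a b => H a b e).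
Proof. by move=> a b; rewrite contract_wedge_delta // V_sol. Qed.

Lemma wedge_Cayley_Hamilton a b e :
  \sum_(k < N.-1) charcoef C k * contract (wchain C (N.-1 - k)) (fun i j => H i j e) a b
    + charcoef C N.-1 * H a b e + charcoef C N * wedge_delta V e a b = 0.
Proof.
have := contract_weyl_Cayley_Hamilton C_antisym_l C_antisym_r a b n_ge2
  (wedge_delta_antisym V e).
rewrite -(prednK (Nbiv_gt0 n_ge2)) big_ord_recr /= subSn // subnn => CH.
rewrite -[RHS]CH -(contract_wedge_delta_solution e a b); congr (_ + _ + _).
apply: eq_bigr => k _; have [m Nk] : exists m, (N.-1 - k = m.+1)%N.
  by exists (N.-1 - k).-1; rewrite prednK // subn_gt0.
rewrite subSn ?Nk 1?ltnW // contract_wchainSS; congr (_ * _).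
by apply: eq_contract => i j; rewrite contract_wedge_delta_solution.
Qed.

Lemma trace_wedge_Cayley_Hamilton a :
  \sum_(k < N.-1) charcoef C k *
      \sum_(e < n) contract (wchain C (N.-1 - k)) (fun i j => H i j e) a e
    + charcoef C N * ((1 - n%:R) / 2 * V a) = 0.
Proof.
transitivity (\sum_(e < n) (\sum_(k < N.-1) charcoef C k *
      contract (wchain C (N.-1 - k)) (fun i j => H i j e) a e
    + charcoef C N.-1 * H a e e + charcoef C N * wedge_delta V e a e)); last first.
  by rewrite big1 // => e _; apply: wedge_Cayley_Hamilton.
rewrite !big_split /= -!mulr_sumr solvable_rhs_trace0 mulr0 addr0 sum_wedge_delta_diag.
by rewrite exchange_big /=; congr (_ + _); apply: eq_bigr => k _; rewrite mulr_sumr.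
Qed.

Lemma solves_weyl_solution a : V a = weyl_solution C H a.
Proof.
have n1_neq0 : (n%:R - 1 : R) != 0 by rewrite subr_eq0 pnatr_eq1; lia.
have /eqP := trace_wedge_Cayley_Hamilton a; rewrite addr_eq0 weyl_solutionE => /eqP ->.
by field; rewrite n1_neq0 cN_neq0.
Qed.

End Solution.

End WeylSolution.

Theorem mainTheorem1 (R : realFieldType) (n : nat) (g : 'M[R]_n)
    (C : tensor22 R n) (H : 'I_n -> 'I_n -> 'I_n -> R) :
  (2 <= n)%N ->
  g^T = g -> \det g != 0 ->
  is_weyl g C ->
  charcoef C (Nbiv n) != 0 ->
  (exists V0 : 'I_n -> R, solves C H V0) ->
  forall V : 'I_n -> R, solves C H V <-> (forall a, V a = weyl_solution C H a).
Proof.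
move=> n_ge2 _ _ [C_l C_r _ _ C_tr] cN_neq0 [V0 V0_sol] V.
have unique := solves_weyl_solution (H := H) C_l C_r C_tr n_ge2 cN_neq0.
split=> [V_sol | V_eq a b c]; first exact: unique.
by rewrite -V0_sol; apply: eq_bigr => d _; rewrite V_eq (unique _ V0_sol).
Qed.
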